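(* For all $n\geq 1$, the spectral radius of $A_n$ is $2(1+\kappa_n)$, and hence the spectral radius of $M_n=(2(1+\kappa_n))^{-1}A_n$ is $1$.
   Context: For $\kappa\in(0,1/2)$, the paired tent map $T_\kappa:[-1,1]\to[-1,1]$ is $T_\kappa(x)=2(1+\kappa)(x+1)-1$ for $x\in[-1,-1/2]$, $T_\kappa(x)=-2(1+\kappa)x-1$ for $x\in[-1/2,0)$, $T_\kappa(0)=0$, $T_\kappa(x)=-2(1+\kappa)x+1$ for $x\in(0,1/2]$, $T_\kappa(x)=2(1+\kappa)(x-1)+1$ for $x\in[1/2,1]$. For $n\geq1$, $\kappa_n$ is the unique solution in $(0,1/2)$ of $(2+2\kappa)^n\kappa=1$, and $T_n=T_{\kappa_n}$. Let $r_0<\dots<r_{2n+4}$ enumerate increasingly the $2n+5$ distinct points of $\{-1,-1/2,0,1/2,1\}\cup\{T_n^i(\pm\kappa_n):0\le i\le n-1\}$ and $R_i=(r_{i-1},r_i)$. $A_n$ is the $(2n+4)\times(2n+4)$ matrix with $a_{ij}=1$ if $R_i\subset T_n(R_j)$ and $0$ otherwise. *)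

From HB Require Import structures.
From mathcomp Require Import all_boot all_order all_algebra.
From mathcomp Require Import complex.
From mathcomp Require Import boolp reals.
Set Implicit Arguments. Unset Strict Implicit. Unset Printing Implicit Defensive.
Import Order.TTheory GRing.Theory Num.Theory.
Local Open Scope ring_scope.

Section Tent.
Variable R : realType.

Definition tent (k x : R) : R :=
  if x <= - 2^-1 then 2 * (1 + k) * (x + 1) - 1
  else if x < 0 then - 2 * (1 + k) * x - 1
  else if x == 0 then 0
  else if x <= 2^-1 then - 2 * (1 + k) * x + 1
  else 2 * (1 + k) * (x - 1) + 1.

Definition points (n : nat) (k : R) : seq R :=
  sort <=%R (undup ([:: -1; - 2^-1; 0; 2^-1; 1]
     ++ [seq iter i (tent k) k | i <- iota 0 n]
     ++ [seq iter i (tent k) (- k) | i <- iota 0 n])).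

Definition pt (n : nat) (k : R) (i : nat) : R := nth 0 (points n k) i.

Definition interval_in_image (k a b c d : R) : Prop :=
  forall x, a < x < b -> exists y, c < y < d /\ tent k y = x.

(* A_n: row/column index i : 'I_(2n+4) stands for R_{i+1} = (r_i, r_{i+1}). *)
Definition Amx (n : nat) (k : R) : 'M[R]_(2 * n + 4) :=
  \matrix_(i, j) (if `[< interval_in_image k (pt n k i) (pt n k i.+1)
                                          (pt n k j) (pt n k j.+1) >]
                  then 1 else 0).

Definition is_spectral_radius (m : nat) (M : 'M[R]_m) (rho : R) : Prop :=
  (exists l : R[i], eigenvalue (map_mx (real_complex R) M) l /\ `|l| = (rho%:C)%C)
  /\ (forall l : R[i], eigenvalue (map_mx (real_complex R) M) l -> `|l| <= (rho%:C)%C).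

End Tent.

(* The partition points form a Markov partition for T = tent k.  The critical
   orbit is T^i(k) = 1 - (2+2k)^i k for 1 <= i <= n and lands on the fixed
   point 0 at i = n, so T is affine with slope +-(2+2k) on each interval
   (r_j, r_j+1) and maps it onto a block of consecutive intervals
   (r_a, r_a+1), ..., (r_c-1, r_c).  Column j of A_n is the indicator of that
   block, hence the interval lengths form a positive left eigenvector of A_n
   for the eigenvalue 2+2k.  For a nonnegative matrix, weighting the triangle
   inequality by a positive left eigenvector bounds the modulus of every
   eigenvalue by the eigenvalue of that eigenvector, which is therefore the
   spectral radius. *)

From HB Require Import structures.
From mathcomp Require Import all_boot all_order all_algebra.
From mathcomp Require Import complex.
From mathcomp Require Import boolp reals.
From mathcomp Require Import ring lra zify.
Set Implicit Arguments. Unset Strict Implicit. Unset Printing Implicit Defensive.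
Import Order.TTheory GRing.Theory Num.Theory.
Local Open Scope ring_scope.

Lemma eigenvalue_trmx (F : fieldType) (m : nat) (g : 'M[F]_m) (a : F) :
  eigenvalue g^T a = eigenvalue g a.
Proof.
rewrite /eigenvalue /eigenspace !kermx_eq0 !row_free_unit -unitmx_tr.
by rewrite linearB /= trmxK tr_scalar_mx.
Qed.

Section NonnegativeMatrix.
Variables (R : realType) (m : nat) (M : 'M[R]_m) (l : 'rV[R]_m) (rho : R).
Hypothesis M_ge0 : forall i j, 0 <= M i j.
Hypothesis l_gt0 : forall j, 0 < l 0 j.
Hypothesis l_eigen : l *m M = rho *: l.
Local Notation rc := (real_complex R).

Lemma left_eigenvalue_ge0 : (0 < m)%N -> 0 <= rho.
Proof.
move=> m_gt0; pose j := Ordinal m_gt0.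
have : 0 <= (l *m M) 0 j.
  by rewrite mxE; apply: sumr_ge0 => i _; rewrite mulr_ge0 // ltW.
by rewrite l_eigen mxE pmulr_lge0.
Qed.

Lemma weighted_norm_gt0 (w : 'rV[R[i]]_m) :
  w != 0 -> 0 < \sum_j rc (l 0 j) * `|w 0 j|.
Proof.
move=> w_neq0; have term_ge0 j : 0 <= rc (l 0 j) * `|w 0 j|.
  by rewrite mulr_ge0 // ler0c ltW.
rewrite lt_def psumr_eq0 ?sumr_ge0 // andbT; apply/allPn.
have [j wj] : exists j, w 0 j != 0.
  apply/existsP; apply: contraR w_neq0; rewrite negb_exists => /forallP w0.
  by apply/eqP/rowP => j; rewrite mxE; apply/eqP; rewrite -[_ == _]negbK w0.
exists j; first exact: mem_index_enum.
by rewrite mulf_neq0 ?normr_eq0 // (inj_eq (@complexI R)) gt_eqF.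
Qed.

Lemma norm_eigenvalue_le (a : R[i]) :
  eigenvalue (map_mx rc M) a -> `|a| <= rc rho.
Proof.
rewrite -eigenvalue_trmx => /eigenvalueP [w w_eigen w_neq0].
have eigen_row i : a * w 0 i = \sum_j w 0 j * rc (M i j).
  have := congr1 (fun v : 'rV[R[i]]_m => v 0 i) w_eigen.
  by rewrite !mxE => <-; apply: eq_bigr => j _; rewrite !mxE.
rewrite -(ler_pM2r (weighted_norm_gt0 w_neq0)) mulr_sumr.
(* The positive left eigenvector weighs the triangle inequality
   |a w_i| <= sum_j M_ij |w_j| into |a| <= rho. *)
apply: (@le_trans _ _ (\sum_i rc (l 0 i) * \sum_j `|w 0 j| * rc (M i j))).
  apply: ler_sum => i _; rewrite mulrCA; apply: ler_wpM2l.
    by rewrite ler0c ltW.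
  rewrite -normrM eigen_row; apply: (le_trans (ler_norm_sum _ _ _)).
  by apply: ler_sum => j _; rewrite normrM [`|rc _|]ger0_norm ?ler0c.
under eq_bigr do rewrite mulr_sumr.
rewrite exchange_big /= mulr_sumr; apply: ler_sum => j _.
have := congr1 (fun v : 'rV[R]_m => rc (v 0 j)) l_eigen.
rewrite !mxE rmorph_sum rmorphM /= => lM_j.
rewrite mulrA -lM_j mulr_suml le_eqVlt; apply/orP; left; apply/eqP.
by apply: eq_bigr => i _; rewrite rmorphM /=; ring.
Qed.

Lemma is_spectral_radius_left_eigen : (0 < m)%N -> is_spectral_radius M rho.
Proof.
move=> m_gt0; split=> [|a]; last exact: norm_eigenvalue_le.
exists (rc rho); split; last by rewrite ger0_norm ?ler0c ?left_eigenvalue_ge0.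
apply/eigenvalueP; exists (map_mx rc l); first by rewrite -map_mxM l_eigen map_mxZ.
rewrite map_mx_eq0; apply: contraTneq (l_gt0 (Ordinal m_gt0)) => ->.
by rewrite mxE ltxx.
Qed.

End NonnegativeMatrix.

Section TentMap.
Variables (R : realType) (k : R).
Local Notation b := (2 * (1 + k)).

Lemma tent_leNhalf x : x <= - 2^-1 -> tent k x = b * (x + 1) - 1.
Proof. by move=> x_le; rewrite /tent x_le. Qed.

Lemma tent_Nhalf0 x : - 2^-1 < x < 0 -> tent k x = - (b * x) - 1.
Proof. by case/andP=> x_gt x_lt; rewrite /tent leNgt x_gt x_lt /=; ring. Qed.

Lemma tent_0half x : 0 < x <= 2^-1 -> tent k x = - (b * x) + 1.
Proof.
case/andP=> x_gt0 x_le; have x_gt : - 2^-1 < x by lra.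
by rewrite /tent (lt_geF x_gt) (lt_gtF x_gt0) gt_eqF // x_le; ring.
Qed.

Lemma tent_gthalf x : 2^-1 < x -> tent k x = b * (x - 1) + 1.
Proof.
move=> x_gt; have x_gt0 : 0 < x by lra.
have x_gtN : - 2^-1 < x by lra.
by rewrite /tent (lt_geF x_gtN) (lt_gtF x_gt0) gt_eqF // (lt_geF x_gt).
Qed.

Lemma tent0 : tent k 0 = 0.
Proof.
have half_lt0 : - 2^-1 < 0 :> R by rewrite oppr_lt0 invr_gt0 ltr0n.
by rewrite /tent (lt_geF half_lt0) ltxx eqxx.
Qed.

Lemma tentN x : tent k (- x) = - tent k x.
Proof.
wlog x_le0 : x / x <= 0.
  move=> tentN_le0; case: (lerP x 0) => [|/ltW]; first exact: tentN_le0.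
  by rewrite -oppr_le0 => /tentN_le0; rewrite opprK => ->; rewrite opprK.
have [x_lt|x_ge] := ltrP x (- 2^-1).
  by rewrite (tent_leNhalf (ltW x_lt)) tent_gthalf; [ring | lra].
case: (eqVneq x (- 2^-1)) => [->|x_neq].
  by rewrite opprK (tent_leNhalf (lexx _)) tent_0half; [field | lra].
case: (eqVneq x 0) => [->|x_neq0]; first by rewrite oppr0 tent0 oppr0.
have x_in : - 2^-1 < x < 0 by rewrite !lt_def x_neq (eq_sym 0) x_neq0 x_ge x_le0.
by rewrite (tent_Nhalf0 x_in) tent_0half; [ring | lra].
Qed.

Lemma iter_tentN i x : iter i (tent k) (- x) = - iter i (tent k) x.
Proof. by elim: i => [//|i IH]; rewrite !iterS IH tentN. Qed.

End TentMap.

Section AffineImage.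
Variables (R : realFieldType) (f : R -> R) (s t P Q : R).
Hypothesis s_gt0 : 0 < s.

Lemma image_affine : (forall y, P < y < Q -> f y = s * y + t) ->
  forall x, (exists y, P < y < Q /\ f y = x) <-> s * P + t < x < s * Q + t.
Proof.
move=> f_affine x; split=> [[y [/andP[Py yQ] <-]]|/andP[Px xQ]].
  by rewrite f_affine ?Py // !ltrD2r !ltr_pM2l // Py yQ.
have y_in : P < (x - t) / s < Q.
  by rewrite ltr_pdivlMr // ltr_pdivrMr //; apply/andP; split; lra.
exists ((x - t) / s); split=> //.
by rewrite f_affine // mulrC divfK ?gt_eqF // subrK.
Qed.

Lemma image_antiaffine : (forall y, P < y < Q -> f y = - (s * y) + t) ->
  forall x, (exists y, P < y < Q /\ f y = x) <-> - (s * Q) + t < x < - (s * P) + t.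
Proof.
move=> f_affine x; split=> [[y [/andP[Py yQ] <-]]|/andP[Qx xP]].
  by rewrite f_affine ?Py // !ltrD2r !ltrN2 !ltr_pM2l // Py yQ.
have y_in : P < (t - x) / s < Q.
  by rewrite ltr_pdivlMr // ltr_pdivrMr //; apply/andP; split; lra.
exists ((t - x) / s); split=> //.
by rewrite f_affine // mulrC divfK ?gt_eqF // opprB subrK.
Qed.

End AffineImage.

Lemma sum_indicator_telescope (R : pzRingType) (f : nat -> R) (a c m : nat) :
  (a <= c <= m)%N ->
  \sum_(i < m) (f i.+1 - f i) * (if (a <= i < c)%N then 1 else 0) = f c - f a.
Proof.
move=> /andP[le_ac le_cm].
pose F i := (f i.+1 - f i) * (if (a <= i < c)%N then 1 else 0).
rewrite -(big_mkord xpredT F).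
rewrite (big_cat_nat (leq0n a) (leq_trans le_ac le_cm)) /= (big_cat_nat le_ac le_cm) /=.
rewrite [X in X + _]big_nat_cond [X in X + _]big1; last first.
  by move=> i /andP[/andP[_ lt_ia] _]; rewrite /F ifF ?mulr0 // leqNgt lt_ia.
rewrite [X in _ + (_ + X)]big_nat_cond [X in _ + (_ + X)]big1; last first.
  by move=> i /andP[/andP[le_ci _] _]; rewrite /F ifF ?mulr0 // ltnNge le_ci andbF.
rewrite add0r addr0 -telescope_sumr //; apply: eq_big_nat => i /andP[le_ai lt_ic].
by rewrite /F le_ai lt_ic mulr1.
Qed.

Section TentPartition.
Variables (R : realType) (n : nat) (k : R).
Hypotheses (n_gt0 : (0 < n)%N) (k_bounds : 0 < k < 2^-1).
Hypothesis k_root : (2 + 2 * k) ^+ n * k = 1.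
Local Notation b := (2 * (1 + k)).
Local Notation orbit i := (iter i (tent k) k).
Local Notation N := (2 * n + 4)%N.
Local Notation r := (points n k).
Local Notation p := (pt n k).

Lemma slope_gt2 : 2 < b.
Proof. by case/andP: k_bounds => k_gt0 _; lra. Qed.

Lemma slope_root : b ^+ n * k = 1.
Proof. by rewrite mulrDr mulr1. Qed.

Lemma slope_exp_small i : (i < n)%N -> 0 < b ^+ i * k < 2^-1.
Proof.
move=> lt_in; case/andP: k_bounds => k_gt0 _.
have b_gt1 : 1 < b by have := slope_gt2; lra.
have bik_gt0 : 0 < b ^+ i * k by rewrite mulr_gt0 // exprn_gt0 //; lra.
have bik_inv : b ^+ i * k * b ^+ (n - i) = 1.
  by rewrite mulrAC -exprD subnKC ?(ltnW lt_in) // slope_root.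
have : b <= b ^+ (n - i) by rewrite -{1}(expr1 b) ler_eXn2l //; lia.
rewrite bik_gt0 /=; nra.
Qed.

Lemma iter_tent_k i : (0 < i <= n)%N -> orbit i = 1 - b ^+ i * k.
Proof.
elim: i => [//|[|i] IH] /andP[_ le_in].
  rewrite /= tent_0half ?expr1; first by ring.
  by case/andP: k_bounds => -> /ltW.
have /andP[bik_gt0 bik_lt] := slope_exp_small le_in.
rewrite iterS IH; last by rewrite /= ltnW.
rewrite tent_gthalf; last lra.
by rewrite (exprS b i.+1); ring.
Qed.

Lemma iter_tent_k_n : orbit n = 0.
Proof. by rewrite iter_tent_k ?n_gt0 ?leqnn // slope_root subrr. Qed.

Lemma iter_tent_k_bounds i : (i < n)%N -> 0 < orbit i < 1 /\ orbit i != 2^-1.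
Proof.
case/andP: k_bounds => k_gt0 k_lt; case: i => [|i] lt_in.
  have k_lt1 : k < 1 by lra.
  by rewrite /= lt_eqF // k_gt0 k_lt1.
have /andP[bik_gt0 bik_lt] := slope_exp_small lt_in.
rewrite iter_tent_k ?(ltnW lt_in) //; split; last by rewrite gt_eqF //; lra.
by apply/andP; split; lra.
Qed.

Lemma iter_tent_k_inj : {in iota 0 n &, injective (fun i => orbit i)}.
Proof.
move=> i j; rewrite !mem_iota !add0n => /andP[_ lt_in] /andP[_ lt_jn].
have b_gt1 : 1 < b by have := slope_gt2; lra.
case/andP: k_bounds => k_gt0 k_lt.
have orbit_gthalf h : (0 < h < n)%N -> 2^-1 < orbit h.
  case/andP=> h_gt0 lt_hn; have := slope_exp_small lt_hn.
  by rewrite iter_tent_k ?h_gt0 ?(ltnW lt_hn) //; lra.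
case: i lt_in => [|i] lt_in; case: j lt_jn => [|j] lt_jn // eq_orbit.
- exfalso; have := orbit_gthalf j.+1 lt_jn; rewrite -eq_orbit /=; lra.
- exfalso; have := orbit_gthalf i.+1 lt_in; rewrite eq_orbit /=; lra.
rewrite !iter_tent_k ?(ltnW lt_in) ?(ltnW lt_jn) // in eq_orbit.
have eq_exp : b ^+ i.+1 = b ^+ j.+1 by apply: (mulIf (lt0r_neq0 k_gt0)); lra.
by apply/eqP; rewrite eqn_leq -!(ler_eXn2l b_gt1) eq_exp lexx.
Qed.

Definition tent_breaks : seq R := [:: -1; - 2^-1; 0; 2^-1; 1].
Definition crit_orbit : seq R := [seq orbit i | i <- iota 0 n].

Lemma points_spec :
  r = sort <=%R (undup (tent_breaks ++ crit_orbit ++ map -%R crit_orbit)).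
Proof.
rewrite /points -map_comp; congr (sort _ (undup (_ ++ _ ++ _))).
by apply: eq_map => i /=; rewrite iter_tentN.
Qed.

Lemma crit_orbit_bounds x : x \in crit_orbit -> 0 < x < 1 /\ x != 2^-1.
Proof.
case/mapP=> i; rewrite mem_iota add0n => /andP[_ lt_in] ->.
exact: iter_tent_k_bounds.
Qed.

Lemma notin_tent_breaks x : 0 < `|x| < 1 -> `|x| != 2^-1 -> x \notin tent_breaks.
Proof.
move=> /andP[x_gt0 x_lt1] x_neq; rewrite !inE.
repeat (apply/norP; split); apply/eqP => x_eq; rewrite x_eq in x_gt0 x_lt1 x_neq.
all: rewrite ?normrN ?normr1 ?normr0 ?ger0_norm in x_gt0 x_lt1 x_neq; lra.
Qed.

Lemma uniq_tent_breaks_orbit : uniq (tent_breaks ++ crit_orbit ++ map -%R crit_orbit).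
Proof.
have uniq_orbit : uniq crit_orbit.
  by rewrite map_inj_in_uniq ?iota_uniq //; apply: iter_tent_k_inj.
have uniq_breaks : uniq tent_breaks.
  apply: (sorted_uniq (@lt_trans _ R) (@ltxx _ R)).
  by rewrite /= !andbT; repeat (apply/andP; split); lra.
rewrite !cat_uniq uniq_breaks uniq_orbit map_inj_uniq ?uniq_orbit //; last exact: oppr_inj.
rewrite has_cat negb_or /= andbT -andbA; apply/and3P; split.
- apply/hasPn => x /crit_orbit_bounds [/andP[x_gt0 x_lt1] x_neq].
  by apply: notin_tent_breaks; rewrite gtr0_norm // x_gt0.
- apply/hasPn => _ /mapP[x /crit_orbit_bounds [/andP[x_gt0 x_lt1] x_neq] ->].
  by apply: notin_tent_breaks; rewrite normrN gtr0_norm // x_gt0.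
- apply/hasPn => _ /mapP[x /crit_orbit_bounds [/andP[x_gt0 _] _] ->].
  apply/negP => /crit_orbit_bounds [/andP[Nx_gt0 _] _]; lra.
Qed.

Lemma size_points : size r = N.+1.
Proof.
rewrite points_spec size_sort undup_id ?uniq_tent_breaks_orbit //.
by rewrite !size_cat !size_map size_iota /=; lia.
Qed.

Lemma sorted_points : sorted <%R r.
Proof. by rewrite /points sort_lt_sorted undup_uniq. Qed.

Lemma mem_points x :
  (x \in r) = [|| x \in tent_breaks, x \in crit_orbit | - x \in crit_orbit].
Proof.
rewrite points_spec mem_sort mem_undup !mem_cat.
by rewrite -[- x \in _](mem_map oppr_inj) opprK.
Qed.

Lemma pt_lt i j : (i < j)%N -> (j <= N)%N -> p i < p j.
Proof.
move=> lt_ij le_jN; apply: (sorted_ltn_nth (@lt_trans _ R) 0 sorted_points) => //;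
  rewrite inE size_points; lia.
Qed.

Lemma pt_le i j : (i <= j)%N -> (j <= N)%N -> p i <= p j.
Proof.
rewrite leq_eqVlt => /orP[/eqP->|lt_ij] le_jN; first exact: lexx.
exact/ltW/pt_lt.
Qed.

Lemma pt_ltn i j : (i <= N)%N -> (j <= N)%N -> p i < p j -> (i < j)%N.
Proof.
move=> le_iN le_jN lt_pij; case: (ltnP i j) => // le_ji.
by have := pt_le le_ji le_iN; rewrite leNgt lt_pij.
Qed.

Lemma mem_pt i : (i <= N)%N -> p i \in r.
Proof. by move=> le_iN; rewrite /pt mem_nth // size_points. Qed.

Lemma pt_index x : x \in r -> exists2 i, (i <= N)%N & p i = x.
Proof.
move=> x_in; exists (index x r); last by rewrite /pt nth_index.
by rewrite -ltnS -size_points index_mem.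
Qed.

Lemma no_points_between j x : (j < N)%N -> x \in r -> ~ (p j < x < p j.+1).
Proof.
move=> lt_jN /pt_index [i le_iN <-] /andP[lt_ji lt_ij].
by have := pt_ltn (ltnW lt_jN) le_iN lt_ji; have := pt_ltn le_iN lt_jN lt_ij; lia.
Qed.

Lemma tent_breaks_points x : x \in tent_breaks -> x \in r.
Proof. by rewrite mem_points => ->. Qed.

Lemma orbit_points i : (i < n)%N -> orbit i \in r.
Proof.
by move=> lt_in; rewrite mem_points (map_f (fun j => orbit j)) ?orbT // mem_iota.
Qed.

Lemma opp_orbit_points i : (i < n)%N -> - orbit i \in r.
Proof.
by move=> lt_in; rewrite mem_points opprK (map_f (fun j => orbit j)) ?orbT // mem_iota.
Qed.

Lemma tent_points x :
  x \in r -> x != - 2^-1 -> x != 0 -> x != 2^-1 -> tent k x \in r.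
Proof.
have orbit_succ i : (i < n)%N -> orbit i.+1 \in r /\ - orbit i.+1 \in r.
  move=> lt_in; case: (ltnP i.+1 n) => [lt_Sin|le_ni].
    by rewrite orbit_points ?opp_orbit_points.
  rewrite (_ : i.+1 = n); last lia.
  by rewrite iter_tent_k_n oppr0 tent_breaks_points ?inE ?eqxx ?orbT.
rewrite mem_points => /or3P[x_break|x_orbit|Nx_orbit] x_nNhalf x_n0 x_nhalf.
- move: x_break; rewrite !inE; case/orP=> [|/or4P[]] /eqP x_eq; subst x;
    rewrite ?eqxx // in x_nNhalf x_n0 x_nhalf.
    rewrite tent_leNhalf ?addNr ?mulr0 ?sub0r ?tent_breaks_points ?inE ?eqxx //; lra.
  rewrite tent_gthalf ?subrr ?mulr0 ?add0r ?tent_breaks_points ?inE ?eqxx ?orbT //; lra.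
- case/mapP: x_orbit => i; rewrite mem_iota add0n => lt_in ->.
  by case: (orbit_succ i lt_in).
- case/mapP: Nx_orbit => i; rewrite mem_iota add0n => lt_in /(canRL (@opprK _)) ->.
  by rewrite tentN -iterS; case: (orbit_succ i lt_in).
Qed.

Lemma k_points : k \in r. Proof. exact: (orbit_points n_gt0). Qed.
Lemma opp_k_points : - k \in r. Proof. exact: (opp_orbit_points n_gt0). Qed.

(* At a breakpoint an adjacent affine branch need not agree with [tent k]:
   its value there is -1, 1, k or -k, which are partition points as well. *)
Lemma affine_leNhalf_points x : x \in r -> x <= - 2^-1 -> b * (x + 1) - 1 \in r.
Proof.
move=> x_in x_le; case: (eqVneq x (- 2^-1)) => [->|x_neq].
  by rewrite (_ : _ - 1 = k) ?k_points //; field.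
by rewrite -tent_leNhalf // tent_points //; apply/eqP; lra.
Qed.

Lemma affine_Nhalf0_points x : x \in r -> - 2^-1 <= x <= 0 -> - (b * x) - 1 \in r.
Proof.
move=> x_in /andP[x_ge x_le]; case: (eqVneq x (- 2^-1)) => [->|x_neq].
  by rewrite (_ : _ - 1 = k) ?k_points //; field.
case: (eqVneq x 0) => [->|x_neq0].
  by rewrite mulr0 oppr0 sub0r tent_breaks_points ?inE ?eqxx.
rewrite -tent_Nhalf0 ?tent_points //; first by apply/eqP; lra.
by rewrite !lt_def x_neq (eq_sym 0) x_neq0 x_ge x_le.
Qed.

Lemma affine_0half_points x : x \in r -> 0 <= x <= 2^-1 -> - (b * x) + 1 \in r.
Proof.
move=> x_in /andP[x_ge x_le]; case: (eqVneq x 2^-1) => [->|x_neq].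
  by rewrite (_ : _ + 1 = - k) ?opp_k_points //; field.
case: (eqVneq x 0) => [->|x_neq0].
  by rewrite mulr0 oppr0 add0r tent_breaks_points ?inE ?eqxx ?orbT.
rewrite -tent_0half ?tent_points //; first by apply/eqP; lra.
by rewrite lt_def x_neq0 x_ge x_le.
Qed.

Lemma affine_gehalf_points x : x \in r -> 2^-1 <= x -> b * (x - 1) + 1 \in r.
Proof.
move=> x_in x_ge; case: (eqVneq x 2^-1) => [->|x_neq].
  by rewrite (_ : _ + 1 = - k) ?opp_k_points //; field.
rewrite -tent_gthalf ?tent_points //; try by apply/eqP; lra.
by rewrite lt_def x_neq x_ge.
Qed.

Lemma interval_pieces j : (j < N)%N ->
  [\/ p j.+1 <= - 2^-1, - 2^-1 <= p j /\ p j.+1 <= 0,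
      0 <= p j /\ p j.+1 <= 2^-1 | 2^-1 <= p j].
Proof.
move=> lt_jN; have lt_pj := pt_lt (ltnSn j) lt_jN.
have not_between c : c \in tent_breaks -> p j < c -> p j.+1 <= c.
  move=> c_break lt_jc; rewrite leNgt; apply/negP => lt_cj.
  by apply: (no_points_between lt_jN (tent_breaks_points c_break)); rewrite lt_jc.
have [le_Nhalf|lt_Nhalf] := lerP (p j.+1) (- 2^-1); first exact: Or41.
have ge_Nhalf : - 2^-1 <= p j.
  by rewrite leNgt; apply/negP => /not_between; rewrite !inE eqxx orbT; lra.
have [le_0|lt_0] := lerP (p j.+1) 0; first exact: Or42.
have ge_0 : 0 <= p j.
  by rewrite leNgt; apply/negP => /not_between; rewrite !inE eqxx !orbT; lra.
have [le_half|lt_half] := lerP (p j.+1) 2^-1; first exact: Or43.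
apply: Or44; rewrite leNgt; apply/negP => /not_between.
by rewrite !inE eqxx !orbT; lra.
Qed.

Lemma image_interval j : (j < N)%N -> exists lo hi, [/\ lo \in r, hi \in r,
  hi - lo = b * (p j.+1 - p j) &
  forall x, (exists y, p j < y < p j.+1 /\ tent k y = x) <-> lo < x < hi].
Proof.
move=> lt_jN; have b_gt0 : 0 < b by have := slope_gt2; lra.
have lt_pj := pt_lt (ltnSn j) lt_jN.
have pj_in := mem_pt (ltnW lt_jN); have pSj_in := mem_pt lt_jN.
case: (interval_pieces lt_jN) => [le_Nhalf|[ge_Nhalf le_0]|[ge_0 le_half]|ge_half].
- exists (b * p j + (b - 1)), (b * p j.+1 + (b - 1)); split; last 1 first.
  + apply: image_affine => // y /andP[_ lt_y].
    by rewrite tent_leNhalf; [ring | lra].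
  + rewrite (_ : _ + _ = b * (p j + 1) - 1); last by ring.
    by apply: affine_leNhalf_points => //; lra.
  + by rewrite (_ : _ + _ = b * (p j.+1 + 1) - 1); [apply: affine_leNhalf_points | ring].
  + by ring.
- exists (- (b * p j.+1) - 1), (- (b * p j) - 1); split; last 1 first.
  + apply: image_antiaffine => // y y_in.
    by rewrite tent_Nhalf0; [ring | apply/andP; split; lra].
  + by apply: affine_Nhalf0_points => //; apply/andP; split; lra.
  + by apply: affine_Nhalf0_points => //; apply/andP; split; lra.
  + by ring.
- exists (- (b * p j.+1) + 1), (- (b * p j) + 1); split; last 1 first.
  + apply: image_antiaffine => // y y_in.
    by rewrite tent_0half; [ring | apply/andP; split; lra].
  + by apply: affine_0half_points => //; apply/andP; split; lra.
  + by apply: affine_0half_points => //; apply/andP; split; lra.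
  + by ring.
- exists (b * p j + (1 - b)), (b * p j.+1 + (1 - b)); split; last 1 first.
  + apply: image_affine => // y /andP[lt_y _].
    by rewrite tent_gthalf; [ring | lra].
  + by rewrite (_ : _ + _ = b * (p j - 1) + 1); [apply: affine_gehalf_points | ring].
  + rewrite (_ : _ + _ = b * (p j.+1 - 1) + 1); last by ring.
    by apply: affine_gehalf_points => //; lra.
  + by ring.
Qed.

Lemma Amx_col_indicator (j : 'I_N) : exists a c, [/\ (a <= c <= N)%N,
  p c - p a = b * (p j.+1 - p j) &
  forall i : 'I_N, Amx n k i j = if (a <= i < c)%N then 1 else 0].
Proof.
have [lo [hi [lo_in hi_in len_img img]]] := image_interval (ltn_ord j).
have [a le_aN lo_eq] := pt_index lo_in; have [c le_cN hi_eq] := pt_index hi_in.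
subst lo hi.
have lt_ac : (a < c)%N.
  apply: pt_ltn le_aN le_cN _; rewrite -subr_gt0 len_img mulr_gt0 ?subr_gt0 ?pt_lt //.
  by have := slope_gt2; lra.
exists a, c; split=> [||i]; [by rewrite (ltnW lt_ac) | by [] |].
have lt_iN := ltn_ord i; have lt_pi := pt_lt (ltnSn i) lt_iN.
rewrite mxE; case: (boolP (a <= i < c)%N) => [/andP[le_ai lt_ic]|not_in].
  rewrite asboolT // => x /andP[lt_x x_lt]; apply/img.
  have := pt_le le_ai (ltnW lt_iN); have := pt_le lt_ic le_cN.
  by move=> ? ?; apply/andP; split; lra.
rewrite asboolF // => sub_img.
have mid_in : p i < (p i + p i.+1) / 2 < p i.+1 by apply/andP; split; lra.
have /img/andP[lt_amid lt_midc] := sub_img _ mid_in.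
move: not_in; rewrite negb_and -ltnNge -leqNgt => /orP[lt_ia|le_ci].
  by have := pt_le lt_ia le_aN; lra.
by have := pt_le le_ci (ltnW lt_iN); lra.
Qed.

Definition interval_lengths : 'rV[R]_N := \row_i (p i.+1 - p i).

Lemma interval_lengths_gt0 i : 0 < interval_lengths 0 i.
Proof. by rewrite mxE subr_gt0 pt_lt. Qed.

Lemma interval_lengths_left_eigen : interval_lengths *m Amx n k = b *: interval_lengths.
Proof.
apply/rowP => j; have [a [c [le_acN len_img Aj]]] := Amx_col_indicator j.
rewrite !mxE -len_img -(sum_indicator_telescope (fun i => p i) le_acN).
by apply: eq_bigr => i _; rewrite -Aj mxE.
Qed.

End TentPartition.

Theorem corollary11 (R : realType) (n : nat) (k : R) :
  (1 <= n)%N -> 0 < k < 2^-1 -> (2 + 2 * k) ^+ n * k = 1 ->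
  is_spectral_radius (Amx n k) (2 * (1 + k))
  /\ is_spectral_radius ((2 * (1 + k))^-1 *: Amx n k) 1.
Proof.
move=> n_gt0 k_bounds k_root.
have b_gt0 : 0 < 2 * (1 + k) by case/andP: k_bounds => k_gt0 _; lra.
have A_ge0 i j : 0 <= Amx n k i j by rewrite mxE; case: ifP.
have l_gt0 := interval_lengths_gt0 n_gt0 k_bounds k_root.
have l_eigen := interval_lengths_left_eigen n_gt0 k_bounds k_root.
have N_gt0 : (0 < 2 * n + 4)%N by rewrite addn4.
split; first exact: is_spectral_radius_left_eigen A_ge0 l_gt0 l_eigen N_gt0.
apply: (is_spectral_radius_left_eigen _ l_gt0 _ N_gt0).
- by move=> i j; rewrite mxE mulr_ge0 // invr_ge0 ltW.
- by rewrite -scalemxAr l_eigen scalerA mulVf ?gt_eqF ?scale1r.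
Qed.
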